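(* Let $\mathcal{S}^*$ be the set of optimal solutions to a zero-one knapsack problem instance with $n$ items and integer capacity $W$. There is a deterministic algorithm that calculates $|\mathcal{S}^*|$ exactly with time- and space-complexity $O(n^2W)$.
   Context: A zero-one knapsack instance consists of a capacity $W>0$ (integer) and $n$ items with positive integer weights $w_1,\dots,w_n$ and integer profits $v_1,\dots,v_n$. For $s\subseteq[n]=\{1,\dots,n\}$ let $w(s)=\sum_{i\in s}w_i$ and $v(s)=\sum_{i\in s}v_i$. The set of feasible solutions is $\mathcal{S}=\{s\subseteq[n]: w(s)\le W\}$, $v_{\max}=\max_{s\in\mathcal{S}}v(s)$, and $\mathcal{S}^*=\{s\in\mathcal{S}: v(s)=v_{\max}\}$ is the set of optimal solutions. Complexity is measured accounting for the bit length of the (possibly exponentially large) integers manipulated. *)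

From mathcomp Require Import all_boot all_order all_algebra.
Set Implicit Arguments. Unset Strict Implicit. Unset Printing Implicit Defensive.
Import Order.TTheory GRing.Theory Num.Theory.
Local Open Scope ring_scope.

Definition ks_weight (n : nat) (w : 'I_n -> nat) (s : {set 'I_n}) : nat :=
  (\sum_(i in s) w i)%N.
Definition ks_value (n : nat) (v : 'I_n -> int) (s : {set 'I_n}) : int :=
  \sum_(i in s) v i.
Definition ks_feasible (n W : nat) (w : 'I_n -> nat) (s : {set 'I_n}) : bool :=
  (ks_weight w s <= W)%N.
Definition ks_optimal (n W : nat) (w : 'I_n -> nat) (v : 'I_n -> int)
  : {set {set 'I_n}} :=
  [set s | ks_feasible W w s &&
           [forall t, ks_feasible W w t ==> (ks_value v t <= ks_value v s)]].

(* Machine model: a deterministic RAM with unbounded integer cells,    *)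
(* direct and indirect addressing.  Cost model: transdichotomous word  *)
(* RAM with multi-word integers: the word size ws is the largest bit   *)
(* length of an input number; an operation costs 1 plus the number of *)
(* words of every integer it reads or writes; space is the total       *)
(* number of words of memory (every cell counts at least one word).    *)
Definition nbits (m : nat) : nat := if m == 0%N then 0%N else (trunc_log 2 m).+1.
Definition zbits (z : int) : nat := nbits `|z|%N.
Definition zwords (ws : nat) (z : int) : nat :=
  maxn 1 ((zbits z + ws.-1) %/ ws).

Inductive instr :=
| IConst of nat & int
| IAdd of nat & nat & nat
| ISub of nat & nat & nat
| ILoad of nat & nat
| IStore of nat & nat
| IJlez of nat & nat
| IJmp of nat
| IHalt.

Definition memory := seq int.
Definition rd (m : memory) (i : nat) : int := nth 0 m i.
Definition wr (m : memory) (i : nat) (z : int) : memory := set_nth 0 m i z.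
Definition mem_space (ws : nat) (m : memory) : nat := sumn (map (zwords ws) m).

Definition step (ws : nat) (P : seq instr) (pc : nat) (m : memory)
  : option (nat * memory * nat) :=
  if (size P <= pc)%N then None else
  match nth IHalt P pc with
  | IConst d z => Some (pc.+1, wr m d z, (1 + zwords ws z)%N)
  | IAdd d a b => let x := rd m a in let y := rd m b in
      Some (pc.+1, wr m d (x + y), (1 + zwords ws x + zwords ws y + zwords ws (x + y))%N)
  | ISub d a b => let x := rd m a in let y := rd m b in
      Some (pc.+1, wr m d (x - y), (1 + zwords ws x + zwords ws y + zwords ws (x - y))%N)
  | ILoad d a => let x := rd m a in let y := rd m `|x|%N in
      Some (pc.+1, wr m d y, (1 + zwords ws x + zwords ws y)%N)
  | IStore a s => let x := rd m a in let y := rd m s in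
      Some (pc.+1, wr m `|x|%N y, (1 + zwords ws x + zwords ws y)%N)
  | IJlez a l => let x := rd m a in
      Some ((if x <= 0 then l else pc.+1), m, (1 + zwords ws x)%N)
  | IJmp l => Some (l, m, 1%N)
  | IHalt => None
  end.

Fixpoint run (ws : nat) (P : seq instr) (fuel pc : nat) (m : memory)
  (t s : nat) : option (memory * nat * nat) :=
  match fuel with
  | 0%N => None
  | k.+1 =>
    match step ws P pc m with
    | None => Some (m, t, s)
    | Some (pc', m', c) => run ws P k pc' m' (t + c) (maxn s (mem_space ws m'))
    end
  end.

Definition ks_input (n W : nat) (w : 'I_n -> nat) (v : 'I_n -> int) : memory :=
  [:: W%:Z; n%:Z] ++ [seq (w i)%:Z | i <- enum 'I_n] ++ [seq v i | i <- enum 'I_n].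

Definition word_size (m : memory) : nat := maxn 1 (foldr maxn 0%N (map zbits m)).

Definition exec (P : seq instr) (fuel : nat) (m : memory) :=
  run (word_size m) P fuel 0 m 0 (mem_space (word_size m) m).

From mathcomp Require Import all_boot all_order all_algebra zify.
Import Order.TTheory GRing.Theory Num.Theory.
Local Open Scope ring_scope.
Set Implicit Arguments. Unset Strict Implicit.

(* For i <= n and c <= W let dp i c pair the optimal value with the number of optimal
   solutions of the instance restricted to the first i items and capacity c.  The feasible
   sets for (i + 1, c) are those for (i, c) together with the disjoint family of the sets
   s + {i} with s feasible for (i, c - w_i); hence dp (i + 1) c arises from dp i c and
   dp i (c - w_i) by keeping the larger value and adding the counts on a tie.  A RAM program
   evaluates this recursion on two tables of W + 1 cells, spending a constant number of
   instructions per item and capacity.  Values are bounded by n 2^ws in absolute value and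
   counts by 2^n, so every cell holds O(n) words: the O(n W) instructions cost O(n^2 W) time
   and the O(n + W) cells occupy O(n^2 W) space. *)

Lemma nbits_ltn m : (m < 2 ^ nbits m)%N.
Proof. by rewrite /nbits; case: eqP => [->|_] //; apply: trunc_log_ltn. Qed.

Lemma nbits_leq m k : (m < 2 ^ k)%N -> (nbits m <= k)%N.
Proof.
rewrite /nbits; case: eqP => // /eqP m_neq0 lt_mk.
have le_logm : (2 ^ trunc_log 2 m <= m)%N by apply: trunc_logP; rewrite // lt0n.
by rewrite -(ltn_exp2l _ _ (isT : (1 < 2)%N)) (leq_ltn_trans le_logm).
Qed.

Lemma zwords_leq ws K z : (0 < ws)%N -> (0 < K)%N -> (`|z|%N < 2 ^ (ws * K))%N ->
  (zwords ws z <= K)%N.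
Proof.
move=> ws_gt0 K_gt0 /nbits_leq le_zb; rewrite /zwords geq_max K_gt0 /=.
apply: (@leq_trans ((ws * K + ws.-1) %/ ws)); first by apply: leq_div2r; rewrite leq_add2r.
rewrite mulnC divnMDl // divn_small ?addn0 //; lia.
Qed.

Lemma zbits_leq_word_size m z : z \in m -> (zbits z <= word_size m)%N.
Proof.
rewrite /word_size => zm; apply: leq_trans (leq_maxr _ _).
elim: m zm => [|y m IH] //=; rewrite inE => /orP [/eqP ->|zm]; first exact: leq_maxl.
exact: leq_trans (IH zm) (leq_maxr _ _).
Qed.

Lemma word_size_gt0 m : (0 < word_size m)%N.
Proof. by rewrite /word_size leq_max. Qed.

Lemma rd_wr m i j z : rd (wr m i z) j = if j == i then z else rd m j.
Proof. by rewrite /rd /wr nth_set_nth. Qed.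

Lemma rd_wr_same m i j z : j = i -> rd (wr m i z) j = z.
Proof. by move=> ->; rewrite rd_wr eqxx. Qed.

Lemma rd_wr_other m i j z : j <> i -> rd (wr m i z) j = rd m j.
Proof. by move/eqP/negbTE => ne; rewrite rd_wr ne. Qed.

Lemma rd_default m j : (size m <= j)%N -> rd m j = 0.
Proof. exact: nth_default. Qed.

Lemma size_wr_leq m i z B : (size m <= B)%N -> (i < B)%N -> (size (wr m i z) <= B)%N.
Proof. by rewrite /wr size_set_nth geq_max => -> ->. Qed.

Section Machine.
Variables (ws L K : nat) (M : int) (P : seq instr).
Hypothesis M_gt0 : 0 < M.
Hypothesis zwords_M : forall z, `|z| < M -> (zwords ws z <= K)%N.

Definition bounded (m : memory) := (size m <= L)%N && all (fun z => `|z| < M) m.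

Lemma bounded_rd m i : bounded m -> `|rd m i| < M.
Proof.
case/andP=> _ /allP m_lt; case: (ltnP i (size m)) => i_m.
  exact/m_lt/mem_nth.
by rewrite rd_default // normr0.
Qed.

Lemma bounded_wr m d z : bounded m -> (d < L)%N -> `|z| < M -> bounded (wr m d z).
Proof.
move=> bm d_L z_M; have [size_m _] := andP bm; rewrite /bounded size_wr_leq //=.
apply/(all_nthP 0) => i _; rewrite -[nth _ _ _]/(rd _ _) rd_wr.
by case: eqP => _; [exact: z_M | exact: bounded_rd].
Qed.

Lemma mem_space_bounded m : bounded m -> (mem_space ws m <= L * K)%N.
Proof.
case/andP=> size_m /allP m_lt; rewrite /mem_space.
apply: (@leq_trans (size m * K)); last by rewrite leq_mul2r size_m orbT.
elim: m size_m m_lt => [|z m IH] //= size_m m_lt; rewrite mulSn leq_add //.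
  by apply/zwords_M/m_lt; rewrite inE eqxx.
by apply: IH => [|y ym]; [exact: ltnW | apply: m_lt; rewrite inE ym orbT].
Qed.

Lemma step_cost_bounded pc m pc' m' c : bounded m -> bounded m' ->
  step ws P pc m = Some (pc', m', c) -> (c <= 1 + 3 * K)%N.
Proof.
move=> bm bm'; rewrite /step; case: leqP => // _.
have rdK i := zwords_M (bounded_rd i bm).
have wrK d z : wr m d z = m' -> (zwords ws z <= K)%N.
  by move=> m'E; have := zwords_M (bounded_rd d bm'); rewrite -m'E rd_wr eqxx.
case: (nth IHalt P pc) => [d z|d a b|d a b|d a|a s|a l|l|] //= [_ m'E <-].
- by have := wrK _ _ m'E; lia.
- by have := wrK _ _ m'E; have := rdK a; have := rdK b; lia.
- by have := wrK _ _ m'E; have := rdK a; have := rdK b; lia.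
- by have := rdK a; have := rdK `|rd m a|%N; lia.
- by have := rdK a; have := rdK s; lia.
- by have := rdK a; lia.
- lia.
Qed.

Inductive reaches (Q : nat -> memory -> Prop) : nat -> memory -> nat -> Prop :=
| reaches_done pc m k : Q pc m -> reaches Q pc m k
| reaches_step pc m pc1 m1 c k : step ws P pc m = Some (pc1, m1, c) -> bounded m1 ->
    reaches Q pc1 m1 k -> reaches Q pc m k.+1.

Lemma reaches_mono Q pc m k k' : (k <= k')%N -> reaches Q pc m k -> reaches Q pc m k'.
Proof.
move=> le_kk' r.
elim: r k' le_kk' => [{}pc {}m {}k Qm|{}pc {}m pc1 m1 c {}k s1 b1 _ IH] k' le_k.
  exact: reaches_done.
by case: k' le_k => // k' le_k; apply: reaches_step s1 b1 (IH _ le_k).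
Qed.

Lemma run_of_reaches Q pc m k t s : reaches Q pc m k -> bounded m ->
  (forall pc' m', Q pc' m' -> step ws P pc' m' = None) ->
  exists pc' m' fuel t' s', [/\ Q pc' m', run ws P fuel pc m t s = Some (m', t', s'),
    (t' <= t + k * (1 + 3 * K))%N & (s' <= maxn s (L * K))%N].
Proof.
move=> r; elim: r t s => [{}pc {}m {}k Qm|{}pc {}m pc1 m1 c {}k s1 b1 _ IH] t s bm halts.
  by exists pc, m, 1%N, t, s; rewrite /= halts // leq_addr leq_maxl.
have [pc' [m' [fuel [t' [s' [Qm' r' le_t le_s]]]]]] :=
  IH (t + c)%N (maxn s (mem_space ws m1)) b1 halts.
exists pc', m', fuel.+1, t', s'; split => //=; first by rewrite s1.
  by have := step_cost_bounded bm b1 s1; rewrite mulSn; lia.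
by have := mem_space_bounded b1; lia.
Qed.

Lemma reaches_next Q pc m pc1 m1 c k : step ws P pc m = Some (pc1, m1, c) ->
  bounded m1 -> (bounded m1 -> reaches Q pc1 m1 k) -> reaches Q pc m k.+1.
Proof. by move=> s1 b1 r1; apply: reaches_step s1 b1 (r1 b1). Qed.

Lemma reaches_const Q pc d z m k : (pc < size P)%N -> nth IHalt P pc = IConst d z ->
  (d < L)%N -> `|z| < M -> bounded m ->
  (bounded (wr m d z) -> reaches Q pc.+1 (wr m d z) k) -> reaches Q pc m k.+1.
Proof.
move=> pc_P Ppc d_L z_M bm; apply: reaches_next (bounded_wr bm d_L z_M).
by rewrite /step leqNgt pc_P Ppc.
Qed.

Lemma reaches_add Q pc d a b x y m k : (pc < size P)%N -> nth IHalt P pc = IAdd d a b ->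
  rd m a = x -> rd m b = y -> (d < L)%N -> `|x + y| < M -> bounded m ->
  (bounded (wr m d (x + y)) -> reaches Q pc.+1 (wr m d (x + y)) k) -> reaches Q pc m k.+1.
Proof.
move=> pc_P Ppc ma mb d_L z_M bm; apply: reaches_next (bounded_wr bm d_L z_M).
by rewrite /step leqNgt pc_P Ppc /= ma mb.
Qed.

Lemma reaches_sub Q pc d a b x y m k : (pc < size P)%N -> nth IHalt P pc = ISub d a b ->
  rd m a = x -> rd m b = y -> (d < L)%N -> `|x - y| < M -> bounded m ->
  (bounded (wr m d (x - y)) -> reaches Q pc.+1 (wr m d (x - y)) k) -> reaches Q pc m k.+1.
Proof.
move=> pc_P Ppc ma mb d_L z_M bm; apply: reaches_next (bounded_wr bm d_L z_M).
by rewrite /step leqNgt pc_P Ppc /= ma mb.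
Qed.

Lemma reaches_load Q pc d a A x m k : (pc < size P)%N -> nth IHalt P pc = ILoad d a ->
  rd m a = A%:Z -> rd m A = x -> (d < L)%N -> bounded m ->
  (bounded (wr m d x) -> reaches Q pc.+1 (wr m d x) k) -> reaches Q pc m k.+1.
Proof.
move=> pc_P Ppc ma mA d_L bm; have x_M := bounded_rd A bm; rewrite mA in x_M.
apply: reaches_next (bounded_wr bm d_L x_M).
by rewrite /step leqNgt pc_P Ppc /= ma mA.
Qed.

Lemma reaches_store Q pc a s A x m k : (pc < size P)%N -> nth IHalt P pc = IStore a s ->
  rd m a = A%:Z -> rd m s = x -> (A < L)%N -> bounded m ->
  (bounded (wr m A x) -> reaches Q pc.+1 (wr m A x) k) -> reaches Q pc m k.+1.
Proof.
move=> pc_P Ppc ma ms A_L bm; have x_M := bounded_rd s bm; rewrite ms in x_M.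
apply: reaches_next (bounded_wr bm A_L x_M).
by rewrite /step leqNgt pc_P Ppc /= ma ms.
Qed.

Lemma reaches_jump_taken Q pc a l m k : (pc < size P)%N -> nth IHalt P pc = IJlez a l ->
  rd m a <= 0 -> bounded m -> reaches Q l m k -> reaches Q pc m k.+1.
Proof.
move=> pc_P Ppc ma bm r; apply: reaches_step r => //.
by rewrite /step leqNgt pc_P Ppc /= ma.
Qed.

Lemma reaches_jump_not_taken Q pc a l m k : (pc < size P)%N -> nth IHalt P pc = IJlez a l ->
  0 < rd m a -> bounded m -> reaches Q pc.+1 m k -> reaches Q pc m k.+1.
Proof.
move=> pc_P Ppc ma bm r; apply: reaches_step r => //.
by rewrite /step leqNgt pc_P Ppc /= leNgt ma.
Qed.

Lemma reaches_jmp Q pc l m k : (pc < size P)%N -> nth IHalt P pc = IJmp l ->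
  bounded m -> reaches Q l m k -> reaches Q pc m k.+1.
Proof.
move=> pc_P Ppc bm r; apply: reaches_step r => //.
by rewrite /step leqNgt pc_P Ppc.
Qed.

End Machine.

Definition comb (p q : int * nat) : int * nat :=
  if q.1 < p.1 then p else if p.1 < q.1 then q else (p.1, (p.2 + q.2)%N).

Lemma comb_gt p q : q.1 < p.1 -> comb p q = p.
Proof. by rewrite /comb => ->. Qed.

Lemma comb_lt p q : p.1 < q.1 -> comb p q = q.
Proof. by rewrite /comb => h; rewrite ltNge (ltW h) /= h. Qed.

Lemma comb_eq p q : p.1 = q.1 -> comb p q = (p.1, (p.2 + q.2)%N).
Proof. by rewrite /comb => ->; rewrite ltxx. Qed.

Lemma comb_ge p q : p.1 <= (comb p q).1 /\ q.1 <= (comb p q).1.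
Proof. by rewrite /comb; case: ltgtP => [h|h|->] /=; rewrite lexx ?ltW. Qed.

Lemma comb_count p q :
  (comb p q).2 = ((p.1 == (comb p q).1) * p.2 + (q.1 == (comb p q).1) * q.2)%N.
Proof.
rewrite /comb; case: ltgtP => h /=.
- by rewrite eqxx (lt_eqF h) mul1n mul0n addn0.
- by rewrite eqxx (lt_eqF h) mul1n mul0n.
- by rewrite h !eqxx !mul1n.
Qed.

Section Summary.
Variables (T : finType) (f : T -> int).

Definition summary (A : {set T}) (p : int * nat) :=
  [/\ exists2 x, x \in A & f x = p.1,
      {in A, forall x, f x <= p.1} &
      #|[set x in A | f x == p.1]| = p.2].

Lemma summary1 x : summary [set x] (f x, 1%N).
Proof.
split => [|y|]; first by exists x; rewrite ?set11.
  by rewrite inE => /eqP ->.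
rewrite (_ : [set _ in _ | _] = [set x]) ?cards1 //.
by apply/setP => y; rewrite !inE; case: eqP => // ->; rewrite eqxx.
Qed.

Lemma summary_card_at (A : {set T}) p y : summary A p -> p.1 <= y ->
  #|[set x in A | f x == y]| = ((p.1 == y) * p.2)%N.
Proof.
case=> _ le_p <-; case: eqP => [-> | ne_py] le_py; first by rewrite mul1n.
apply/eqP; rewrite mul0n cards_eq0; apply/eqP/setP => x; rewrite !inE.
apply/negbTE/andP => -[xA /eqP fx]; apply: ne_py.
by apply/le_anti; rewrite le_py -fx le_p.
Qed.

Lemma summary_comb (A B : {set T}) p q : [disjoint A & B] ->
  summary A p -> summary B q -> summary (A :|: B) (comb p q).
Proof.
move=> dAB sA sB; have [[a aA fa] le_p _] := sA; have [[b bB fb] le_q _] := sB.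
have [le_pc le_qc] := comb_ge p q.
split.
- rewrite /comb; case: ltgtP => _ /=.
  + by exists a; rewrite ?inE ?aA.
  + by exists b; rewrite ?inE ?bB ?orbT.
  + by exists a; rewrite ?inE ?aA.
- move=> x; rewrite inE => /orP [xA|xB].
    exact: le_trans (le_p x xA) le_pc.
  exact: le_trans (le_q x xB) le_qc.
- set y := (comb p q).1.
  have -> : [set x in A :|: B | f x == y] =
            [set x in A | f x == y] :|: [set x in B | f x == y].
    by apply/setP => x; rewrite !inE andb_orl.
  rewrite cardsU (_ : _ :&: _ = set0) ?cards0 ?subn0.
    by rewrite (summary_card_at sA le_pc) (summary_card_at sB le_qc) comb_count.
  apply/setP => x; rewrite !inE; apply/negbTE/andP => -[/andP [xA _] /andP [xB _]].
  by rewrite (disjointFr dAB xA) in xB.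
Qed.

Lemma summary_shift (A : {set T}) g k p : {in A &, injective g} ->
  {in A, forall x, f (g x) = f x + k} -> summary A p -> summary (g @: A) (p.1 + k, p.2).
Proof.
move=> g_inj fg [[a aA fa] le_p cnt]; split => /=.
- by exists (g a); rewrite ?imset_f // fg ?fa.
- by move=> _ /imsetP [x xA ->]; rewrite fg // lerD2r le_p.
- have -> : [set y in g @: A | f y == p.1 + k] = g @: [set x in A | f x == p.1].
    apply/setP => y; rewrite inE; apply/andP/imsetP => [[/imsetP [x xA ->]] | [x]].
      by rewrite fg // (inj_eq (addIr k)) => fx; exists x; rewrite // inE xA.
    by rewrite inE => /andP [xA /eqP fx] ->; rewrite imset_f // fg // fx.
  rewrite -cnt card_in_imset // => x y; rewrite !inE => /andP [xA _] /andP [yA _].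
  exact: g_inj.
Qed.
End Summary.

Section Knapsack.
Variables (n : nat) (w : 'I_n -> nat) (v : 'I_n -> int).

Definition wn (j : nat) : nat := nth 0%N [seq w i | i <- enum 'I_n] j.
Definition vn (j : nat) : int := nth 0 [seq v i | i <- enum 'I_n] j.

Lemma wnE (j : 'I_n) : wn j = w j.
Proof. by rewrite /wn (nth_map j) ?size_enum_ord // nth_ord_enum. Qed.

Lemma vnE (j : 'I_n) : vn j = v j.
Proof. by rewrite /vn (nth_map j) ?size_enum_ord // nth_ord_enum. Qed.

Fixpoint dp (i c : nat) : int * nat :=
  if i is i'.+1 then
    if (wn i' <= c)%N then
      comb (dp i' c) ((dp i' (c - wn i')).1 + vn i', (dp i' (c - wn i')).2)
    else dp i' c
  else (0, 1%N).

Lemma dpS_lt i c : (c < wn i)%N -> dp i.+1 c = dp i c.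
Proof. by move=> lt_cw; rewrite /= leqNgt lt_cw. Qed.

Lemma dpS_ge i c : (wn i <= c)%N ->
  dp i.+1 c = comb (dp i c) ((dp i (c - wn i)).1 + vn i, (dp i (c - wn i)).2).
Proof. by move=> le_wc; rewrite /= le_wc. Qed.

Definition prefix (i : nat) : {set 'I_n} := [set k : 'I_n | (k < i)%N].

Definition feasible_in (i c : nat) : {set {set 'I_n}} :=
  [set s : {set 'I_n} | (s \subset prefix i) && (ks_weight w s <= c)%N].

Lemma feasible_in0 c : feasible_in 0 c = [set set0].
Proof.
apply/setP => s; rewrite !inE (_ : prefix 0 = set0) ?subset0; last first.
  by apply/setP => k; rewrite !inE.
by case: eqP => [->|] //=; rewrite /ks_weight big_set0.
Qed.

Lemma valueU1 (j : 'I_n) (t : {set 'I_n}) :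
  j \notin t -> ks_value v (j |: t) = ks_value v t + v j.
Proof. by move=> jt; rewrite /ks_value big_setU1 // addrC. Qed.

Section Step.
Variables (i : nat) (lt_in : (i < n)%N).
Local Notation j := (Ordinal lt_in).

Lemma prefixS : prefix i.+1 = j |: prefix i.
Proof. by apply/setP => k; rewrite !inE ltnS leq_eqVlt. Qed.

Lemma notin_feasible_in c (s : {set 'I_n}) : s \in feasible_in i c -> j \notin s.
Proof.
by rewrite inE => /andP [/subsetP sub _]; apply/negP => /sub; rewrite inE ltnn.
Qed.

Lemma feasible_inS_notin c (s : {set 'I_n}) : j \notin s ->
  (s \in feasible_in i.+1 c) = (s \in feasible_in i c).
Proof.
move=> js; rewrite !inE prefixS; congr (_ && _).
apply/subsetP/subsetP => sub k ks; last by rewrite inE sub ?orbT.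
by have := sub k ks; rewrite !inE; case: eqP => // kj; rewrite -kj ks in js.
Qed.

Lemma feasible_inS_in c (s : {set 'I_n}) : j \in s ->
  (s \in feasible_in i.+1 c) = (w j <= c)%N && (s :\ j \in feasible_in i (c - w j)).
Proof.
move=> js; rewrite !inE prefixS -subDset /ks_weight (big_setD1 j js) /=.
case: (_ \subset _); rewrite ?andbF //=.
by case: (leqP (w j) c) => [le_wc | lt_cw]; [rewrite leq_subRL | rewrite leqNgt ltn_addr].
Qed.

Lemma feasible_inS_lt c : (c < w j)%N -> feasible_in i.+1 c = feasible_in i c.
Proof.
move=> lt_cw; apply/setP => s; case: (boolP (j \in s)) => js.
  rewrite feasible_inS_in // leqNgt lt_cw /=.
  by apply/esym/negbTE; exact: contraL (@notin_feasible_in c s) js.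
exact: feasible_inS_notin.
Qed.

Lemma feasible_inS_ge c : (w j <= c)%N ->
  feasible_in i.+1 c = feasible_in i c :|: [set j |: t | t in feasible_in i (c - w j)].
Proof.
move=> le_wc; apply/setP => s; rewrite in_setU; case: (boolP (j \in s)) => js.
  rewrite feasible_inS_in // le_wc (contraTF (@notin_feasible_in c s)) //=.
  apply/idP/imsetP => [sF | [t tF ->]]; first by exists (s :\ j); rewrite ?setD1K.
  by rewrite setU1K // (notin_feasible_in tF).
rewrite feasible_inS_notin // (_ : s \in imset _ _ = false) ?orbF //.
by apply/negbTE/imsetP => -[t _ st]; rewrite st setU11 in js.
Qed.

End Step.

Lemma dp_summary i c : (i <= n)%N -> summary (ks_value v) (feasible_in i c) (dp i c).
Proof.
elim: i c => [|i IH] c lt_in.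
  rewrite feasible_in0 (_ : dp 0 c = (ks_value v set0, 1%N)); first exact: summary1.
  by rewrite /ks_value big_set0.
have {}IH c' := IH c' (ltnW lt_in); set j := Ordinal lt_in.
rewrite /= -[wn i]/(wn j) -[vn i]/(vn j) wnE vnE.
case: leqP => [le_wc | lt_cw]; last by rewrite (feasible_inS_lt lt_cw).
rewrite (feasible_inS_ge le_wc); apply: summary_comb => //.
- rewrite disjoint_subset; apply/subsetP => s /(notin_feasible_in lt_in) js.
  apply/negP => /imsetP [t _ st].
  by rewrite st setU11 in js.
- apply: summary_shift => //.
    move=> t1 t2 /(notin_feasible_in lt_in) j1 /(notin_feasible_in lt_in) j2 e.
    by rewrite -(setU1K j1) e setU1K.
  by move=> t /(notin_feasible_in lt_in) jt; rewrite valueU1.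
Qed.

Lemma card_ks_optimal W : #|ks_optimal W w v| = (dp n W).2.
Proof.
have [[s0 s0F s0v] le_dp <-] := dp_summary W (leqnn n).
have feasibleE s : (s \in feasible_in n W) = ks_feasible W w s.
  by rewrite inE (_ : s \subset prefix n) //; apply/subsetP => k _; rewrite inE.
apply: eq_card => s; rewrite [in RHS]inE feasibleE inE.
case: (boolP (ks_feasible W w s)) => //= sF.
apply/forallP/eqP => [opt_s | -> t]; last by apply/implyP; rewrite -feasibleE; apply: le_dp.
apply/le_anti; rewrite le_dp ?feasibleE //= -s0v.
by have := opt_s s0; rewrite -feasibleE s0F.
Qed.

Lemma dp_count_bounds i c : (i <= n)%N -> (0 < (dp i c).2 <= 2 ^ n)%N.
Proof.
case/(dp_summary c) => -[s sF sv] _ <-; apply/andP; split.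
  by apply/card_gt0P; exists s; rewrite inE sF sv eqxx.
apply: leq_trans (max_card _) _.
by rewrite -cardsT -powersetT card_powerset cardsT card_ord.
Qed.

Lemma dp_value_bound (V : nat) i c : (forall k, `|v k| <= V%:Z) -> (i <= n)%N ->
  `|(dp i c).1| <= (n * V)%:Z.
Proof.
move=> le_vV /(dp_summary c) [[s _ <-] _ _]; rewrite /ks_value.
apply: le_trans (ler_norm_sum _ _ _) _.
apply: (@le_trans _ _ (\sum_(k in s) V%:Z)); first by apply: ler_sum => k _.
rewrite sumr_const -mulr_natl natz -PoszM lez_nat leq_mul2r.
by rewrite (leq_trans (max_card _)) ?card_ord ?orbT.
Qed.

End Knapsack.

(* Registers are cells 0-18.  The input is first copied to the cells D, ..., D + 2n + 1 with
   D = W + 20n - 2 (obtained by adding n to W twenty times), clear of the registers and of the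
   original input.  The value table occupies the W + 1 cells from D + 2n + 2 and the count
   table the next W + 1 cells; counts are stored minus one, so that the initially absent
   (zero) cells already hold dp 0 = (0, 1).  Item i (register 3) is processed by sweeping
   the capacity c (register 12) down from W to w_i, so one pair of tables suffices.  Jump
   targets are marked with their addresses. *)
Definition prog : seq instr :=
  [:: IJlez 1 128] ++ nseq 20 (IAdd 0 0 1) ++
  [:: IStore 0 2; IConst 2 1%:Z; ISub 2 0 2; IStore 2 1; IConst 2 0%:Z; IAdd 2 2 0] ++
  nseq 20 (ISub 2 2 1) ++
  [:: IConst 1 2%:Z; ISub 1 0 1; IStore 1 2; IConst 1 1%:Z; ISub 1 0 1; ILoad 1 1;
      IAdd 1 1 1; IConst 2 1%:Z; IAdd 1 1 2; IAdd 0 0 1; IConst 2 2%:Z; ISub 0 0 2] ++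
  (*  59 *) [:: IConst 2 2%:Z; ISub 2 1 2; IJlez 2 68; ILoad 2 1; IStore 0 2; IConst 2 1%:Z;
              ISub 1 1 2; ISub 0 0 2; IJmp 59] ++
  (*  68 *) [:: IConst 2 2%:Z; ISub 0 0 2; IConst 2 1%:Z; IAdd 1 0 2; ILoad 4 1; ILoad 9 0;
              IConst 2 2%:Z; IAdd 5 0 2; IAdd 6 5 4; IAdd 7 6 4; IAdd 8 7 9; IConst 2 1%:Z;
              IAdd 8 8 2; IConst 3 0%:Z] ++
  (*  82 *) [:: ISub 1 4 3; IJlez 1 123; ILoad 10 5; ILoad 11 6; IConst 12 0%:Z; IAdd 12 12 9] ++
  (*  88 *) [:: ISub 1 10 12; IJlez 1 91; IJmp 118] ++
  (*  91 *) [:: IAdd 13 7 12; ISub 14 13 10; ILoad 15 13; ILoad 16 14; IAdd 16 16 11;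
              ISub 1 15 16; IJlez 1 99; IJmp 115] ++
  (*  99 *) [:: ISub 1 16 15; IJlez 1 107; IStore 13 16; IAdd 13 8 12; ISub 14 13 10;
              ILoad 17 14; IStore 13 17; IJmp 115] ++
  (* 107 *) [:: IAdd 13 8 12; ISub 14 13 10; ILoad 17 14; ILoad 18 13; IAdd 17 17 18;
              IConst 2 1%:Z; IAdd 17 17 2; IStore 13 17] ++
  (* 115 *) [:: IConst 2 1%:Z; ISub 12 12 2; IJmp 88] ++
  (* 118 *) [:: IConst 2 1%:Z; IAdd 3 3 2; IAdd 5 5 2; IAdd 6 6 2; IJmp 82] ++
  (* 123 *) [:: IAdd 13 8 9; ILoad 0 13; IConst 2 1%:Z; IAdd 0 0 2; IHalt] ++
  (* 128 *) [:: IConst 0 1%:Z; IHalt].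

Lemma time_bound_arith n W : (0 < n)%N -> (0 < W)%N ->
  ((59 + (9 * (2 * n - 1) + 3 + (14 + (n * (22 * W + 36) + 6 + 0)))) * (1 + 3 * (n + 9))
   <= 5000 * (n ^ 2 * W + 1))%N.
Proof.
move=> n_gt0 W_gt0; have le_n_nW : (n <= n * W)%N by rewrite leq_pmulr.
have steps : (59 + (9 * (2 * n - 1) + 3 + (14 + (n * (22 * W + 36) + 6 + 0)))
              <= 149 * (n * W))%N by lia.
have cost : (1 + 3 * (n + 9) <= 31 * n)%N by lia.
apply: leq_trans (leq_mul steps cost) _.
have -> : (149 * (n * W) * (31 * n) = 4619 * (n ^ 2 * W))%N by rewrite expnS expn1; lia.
lia.
Qed.

Lemma space_bound_arith n W : (0 < n)%N -> (0 < W)%N ->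
  ((W + 20 * n - 2 + 2 * n + 2 + W + 1 + W + 1) * (n + 9) <= 5000 * (n ^ 2 * W + 1))%N.
Proof.
move=> n_gt0 W_gt0.
have le_n_nW : (n <= n * W)%N by rewrite leq_pmulr.
have le_W_nW : (W <= n * W)%N by rewrite leq_pmull.
have cells : (W + 20 * n - 2 + 2 * n + 2 + W + 1 + W + 1 <= 27 * (n * W))%N by lia.
have words : (n + 9 <= 10 * n)%N by lia.
apply: leq_trans (leq_mul cells words) _.
have -> : (27 * (n * W) * (10 * n) = 270 * (n ^ 2 * W))%N by rewrite expnS expn1; lia.
lia.
Qed.

Section Verification.
Variables (n W : nat) (w : 'I_n -> nat) (v : 'I_n -> int).
Hypothesis W_gt0 : (0 < W)%N.
Hypothesis w_gt0 : forall i, (0 < w i)%N.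

Local Notation inp := (ks_input W w v).
Local Notation ws := (word_size inp).
Local Notation B := (2 ^ ws)%N.
Local Notation K := (n + 9)%N.
Local Notation M := (2 ^ (ws * K))%N.
Local Notation D := (W + 20 * n - 2)%N.
Local Notation Dval := (D + 2 * n + 2)%N.
Local Notation Dcnt := (Dval + W + 1)%N.
Local Notation L := (Dcnt + W + 1)%N.
Local Notation reaches_from := (reaches ws L M%:Z prog).

Lemma M_gt0 : 0 < M%:Z.
Proof. by rewrite ltz_nat expn_gt0. Qed.

Lemma inp_lt_B z : z \in inp -> (`|z|%N < B)%N.
Proof.
move=> z_inp; apply: leq_trans (nbits_ltn _) _.
by rewrite leq_exp2l ?zbits_leq_word_size.
Qed.

Lemma W_lt_B : (W < B)%N.
Proof. by apply: (@inp_lt_B W%:Z); rewrite inE eqxx. Qed.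

Lemma n_lt_B : (n < B)%N.
Proof. by apply: (@inp_lt_B n%:Z); rewrite !inE eqxx orbT. Qed.

Lemma B_lt_M : (64 * B < M)%N.
Proof.
have ws_gt0 := word_size_gt0 inp.
apply: (@leq_trans (2 ^ (ws + 7))%N); first by rewrite expnD; have := expn_gt0 2 ws; lia.
by rewrite leq_exp2l //; nia.
Qed.

Lemma w_lt_B k : (w k < B)%N.
Proof. by apply: (@inp_lt_B (w k)%:Z); rewrite !mem_cat map_f ?orbT ?mem_enum. Qed.

Lemma v_lt_B k : `|v k| < B%:Z.
Proof. by rewrite -abszE ltz_nat (@inp_lt_B (v k)) // !mem_cat map_f ?orbT ?mem_enum. Qed.

Lemma size_inp : size inp = (2 * n + 2)%N.
Proof. by rewrite /ks_input /= !size_cat !size_map -enumT size_enum_ord; lia. Qed.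

Lemma rd_inp_w j : (j < n)%N -> rd inp (2 + j) = (wn w j)%:Z.
Proof.
move=> lt_jn; rewrite /rd /ks_input /= nth_cat size_map size_enum_ord lt_jn.
rewrite (nth_map (Ordinal lt_jn)) ?size_enum_ord //.
by rewrite /wn (nth_map (Ordinal lt_jn)) ?size_enum_ord.
Qed.

Lemma rd_inp_v j : (j < n)%N -> rd inp (2 + n + j) = vn v j.
Proof.
move=> lt_jn; have -> : (2 + n + j = (n + j).+2)%N by lia.
by rewrite /rd /ks_input /= nth_cat size_map size_enum_ord ltnNge leq_addr /= addKn.
Qed.

Lemma dp_bounds i c : (i <= n)%N ->
  `|(dp w v i c).1| <= (n * B)%N%:Z /\ (1 <= (dp w v i c).2 <= 2 ^ n)%N.
Proof.
by move=> le_in; rewrite dp_count_bounds // dp_value_bound // => k; rewrite ltW ?v_lt_B.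
Qed.

Lemma cell_bound : (0 < n)%N -> (2 * (n * B) + 64 * B + 4 * 2 ^ n < M)%N.
Proof.
move=> n_gt0; have ws_gt0 := word_size_gt0 inp.
have le_M : (2 ^ (ws * (n + 7)) <= M)%N by rewrite leq_exp2l //; nia.
have BB : (B * B * 32 <= 2 ^ (ws * (n + 7)))%N.
  by rewrite -!expnD (_ : 32 = 2 ^ 5)%N // -expnD leq_exp2l //; nia.
have BM : (B * 128 <= 2 ^ (ws * (n + 7)))%N.
  by rewrite (_ : 128 = 2 ^ 7)%N // -expnD leq_exp2l //; nia.
have pow_n : (2 ^ n * 128 <= 2 ^ (ws * (n + 7)))%N.
  by rewrite (_ : 128 = 2 ^ 7)%N // -expnD leq_exp2l //; nia.
have nB : (n * B <= B * B)%N by rewrite leq_mul2r ltnW ?n_lt_B ?orbT.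
by have := expn_gt0 2 ws; have := expn_gt0 2 n; lia.
Qed.

Definition copy_inv (s : nat) (m : memory) :=
  [/\ rd m 1 = s%:Z, rd m 0 = (D + s)%:Z,
      forall j, ((j <= 2) || (s < j <= 2 * n + 1))%N -> rd m (D + j) = rd inp j,
      forall j, (3 <= j <= 2 * n + 1)%N -> rd m j = rd inp j &
      (size m <= Dval)%N].

Definition registers_inv (i : nat) (m : memory) :=
  rd m 3 = i%:Z /\ rd m 4 = n%:Z /\ rd m 5 = (D + 2 + i)%:Z /\
  rd m 6 = (D + 2 + n + i)%:Z /\ rd m 7 = Dval%:Z /\ rd m 8 = Dcnt%:Z /\ rd m 9 = W%:Z.

Definition inputs_copied (m : memory) := forall j, (j < n)%N ->
  rd m (D + 2 + j) = (wn w j)%:Z /\ rd m (D + 2 + n + j) = vn v j.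

Definition tables (m : memory) (f : nat -> int * nat) := forall c, (c <= W)%N ->
  rd m (Dval + c) = (f c).1 /\ rd m (Dcnt + c) = ((f c).2)%:Z - 1.

Definition outer_inv (i : nat) (m : memory) :=
  [/\ registers_inv i m, inputs_copied m & tables m (dp w v i)].

Definition inner_inv (i c : nat) (m : memory) :=
  registers_inv i m /\ inputs_copied m /\
  rd m 10 = (wn w i)%:Z /\ rd m 11 = vn v i /\ rd m 12 = c%:Z /\
  tables m (fun c' => if (c' <= c)%N then dp w v i c' else dp w v i.+1 c').


Ltac clear_aux := repeat match goal with
  | H : is_true (bounded _ _ _) |- _ => clear H
  | H : forall _, _ |- _ => clear H
  end.
Ltac arith := clear_aux; lia.
Ltac rd_simpl := repeat match goal with
  | |- context [rd (wr ?m ?i ?z) ?j] =>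
     first [ rewrite (@rd_wr_other m i j z); [ | solve [ discriminate | arith ] ]
           | rewrite (@rd_wr_same m i j z); [ | solve [ reflexivity | arith ] ] ]
  end.
Ltac rd_eq := rd_simpl; reflexivity.
Ltac bounded_hyp := match goal with H : is_true (bounded _ _ _) |- _ => exact H end.
Ltac renew_bounded := match goal with H : is_true (bounded _ _ _) |- _ => clear H end; move=> ?.
Ltac step := match goal with |- reaches _ _ _ _ _ ?pc _ _ =>
  let i := eval vm_compute in (nth IHalt prog pc) in
  lazymatch i with
  | IConst _ _ => apply: (reaches_const M_gt0);
      [reflexivity|reflexivity|arith|arith|bounded_hyp|renew_bounded]
  | IAdd _ _ _ => eapply (reaches_add M_gt0);
      [reflexivity|reflexivity|rd_eq|rd_eq|arith|arith|bounded_hyp|renew_bounded]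
  | ISub _ _ _ => eapply (reaches_sub M_gt0);
      [reflexivity|reflexivity|rd_eq|rd_eq|arith|arith|bounded_hyp|renew_bounded]
  | IJmp _ => eapply reaches_jmp; [reflexivity|reflexivity|bounded_hyp|]
  end end.
Ltac step_load A := eapply (reaches_load M_gt0 (A := A));
  [reflexivity|reflexivity|rd_simpl; arith|rd_eq|arith|bounded_hyp|renew_bounded].
Ltac step_store A := eapply (reaches_store M_gt0 (A := A));
  [reflexivity|reflexivity|rd_simpl; arith|rd_eq|arith|bounded_hyp|renew_bounded].
Ltac step_taken := eapply reaches_jump_taken;
  [reflexivity|reflexivity|rd_simpl; arith|bounded_hyp|].
Ltac step_skip := eapply reaches_jump_not_taken;
  [reflexivity|reflexivity|rd_simpl; arith|bounded_hyp|].

Lemma input_bounds : [/\ (W < B)%N, (n < B)%N & (64 * B < M)%N].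
Proof. by split; [exact: W_lt_B | exact: n_lt_B | exact: B_lt_M]. Qed.

Lemma item_bounds i : (i < n)%N -> [/\ (0 < wn w i)%N, (wn w i < B)%N & `|vn v i| < B%:Z].
Proof.
by move=> lt_in; rewrite -[i]/(nat_of_ord (Ordinal lt_in)) wnE vnE w_gt0 w_lt_B v_lt_B.
Qed.

Lemma run_copy_start Q k : (0 < n)%N -> bounded L M%:Z inp ->
  (forall m, bounded L M%:Z m -> copy_inv (2 * n + 1) m -> reaches_from Q 59 m k) ->
  reaches_from Q 0 inp (59 + k).
Proof.
move=> n_gt0 bm cont; have [W_B n_B B_M] := input_bounds.
have rd0 : rd inp 0 = W%:Z by [].
have rd1 : rd inp 1 = n%:Z by [].
step_skip; do 20 step.
step_store (W + 20 * n)%N; do 2 step.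
step_store (W + 20 * n - 1)%N; do 24 step.
step_store (D)%N; do 2 step.
step_load (W + 20 * n - 1)%N; do 6 step.
apply: cont; first bounded_hyp.
split; [by rd_simpl; lia | by rd_simpl; lia | | by move=> j j_kept; rd_eq |].
  move=> j j_copied; case: (leqP j 2) => [le_j2 | lt_2j]; last lia.
  by case: j j_copied le_j2 => [|[|[|j]]] // _ _; rd_simpl; lia.
by repeat (apply: size_wr_leq; [|lia]); rewrite size_inp; lia.
Qed.

Lemma run_copy_loop Q k d m : (0 < n)%N -> (d + 2 <= 2 * n + 1)%N ->
  bounded L M%:Z m -> copy_inv (d + 2) m ->
  (forall m', bounded L M%:Z m' -> copy_inv 2 m' -> reaches_from Q 68 m' k) ->
  reaches_from Q 59 m (9 * d + 3 + k).
Proof.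
move=> n_gt0; have [W_B n_B B_M] := input_bounds.
elim: d m => [|d IH] m le_d bm [r1 r0 copied kept size_m] cont.
  rewrite (_ : (9 * 0 + 3 + k = k.+3)%N) //.
  step; step; step_taken.
  apply: cont; first bounded_hyp.
  split; [by rd_simpl; arith | by rd_simpl; arith | | |].
  - by move=> j j_copied; rd_simpl; apply: copied; lia.
  - by move=> j j_kept; rd_simpl; apply: kept; lia.
  - by repeat (apply: size_wr_leq; [|lia]).
have -> : (9 * d.+1 + 3 + k = (9 * d + 3 + k).+4.+4.+1)%N by lia.
step; step; step_skip.
step_load (d.+1 + 2)%N.
step_store (D + (d.+1 + 2))%N.
do 4 step.
apply: IH; [lia | bounded_hyp | | exact: cont].
split; [by rd_simpl; arith | by rd_simpl; arith | | |].
- move=> j j_copied; case: (eqVneq j (d.+1 + 2)) => [->|ne].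
    by rd_simpl; apply: kept; lia.
  by rd_simpl; apply: copied; lia.
- by move=> j j_kept; rd_simpl; apply: kept; lia.
- by repeat (apply: size_wr_leq; [|lia]).
Qed.

Lemma run_setup m Q k : (0 < n)%N -> bounded L M%:Z m -> copy_inv 2 m ->
  (forall m', bounded L M%:Z m' -> outer_inv 0 m' -> reaches_from Q 82 m' k) ->
  reaches_from Q 68 m (14 + k).
Proof.
move=> n_gt0 bm [r1 r0 copied kept size_m] cont; have [W_B n_B B_M] := input_bounds.
have rdW : rd m (D + 0) = W%:Z by apply: copied.
have rdn : rd m (D + 1) = n%:Z by apply: copied.
rewrite addn0 in rdW.
do 4 step.
step_load (D + 1)%N.
step_load (D)%N.
do 8 step.
apply: cont; first bounded_hyp.
split; first by repeat split; rd_simpl; arith.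
- move=> j lt_jn; split; rd_simpl.
    by have := copied (2 + j)%N; rewrite !addnA => ->; [exact: rd_inp_w | lia].
  by have := copied (2 + n + j)%N; rewrite !addnA => ->; [exact: rd_inp_v | lia].
- by move=> c le_cW; split; rd_simpl; rewrite rd_default /=; lia.
Qed.

Lemma run_outer_step i m Q k : (0 < n)%N -> (i < n)%N -> bounded L M%:Z m -> outer_inv i m ->
  (forall m', bounded L M%:Z m' -> inner_inv i W m' -> reaches_from Q 88 m' k) ->
  reaches_from Q 82 m (6 + k).
Proof.
move=> n_gt0 lt_in bm [[r3 [r4 [r5 [r6 [r7 [r8 r9]]]]]] inputs tab] cont.
have [W_B n_B B_M] := input_bounds; have [wi vi] := inputs i lt_in.
have cells := cell_bound n_gt0.
step; step_skip.
step_load (D + 2 + i)%N.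
step_load (D + 2 + n + i)%N.
step; step.
apply: cont; first bounded_hyp.
split; first by repeat split; rd_simpl; arith.
split; first by move=> j lt_jn; rd_simpl; apply: inputs.
do 3 (split; first by rd_simpl; arith).
by move=> c le_cW; rewrite le_cW; rd_simpl; exact: tab.
Qed.

Lemma run_outer_exit m Q k : (0 < n)%N -> bounded L M%:Z m -> outer_inv n m ->
  (forall m', bounded L M%:Z m' -> rd m' 0 = ((dp w v n W).2)%:Z -> reaches_from Q 127 m' k) ->
  reaches_from Q 82 m (6 + k).
Proof.
move=> n_gt0 bm [[r3 [r4 [r5 [r6 [r7 [r8 r9]]]]]] inputs tab] cont.
have [W_B n_B B_M] := input_bounds; have cells := cell_bound n_gt0.
have [value_n count_n] := @dp_bounds n W (leqnn n).
have [val_W cnt_W] := tab W (leqnn W).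
step; step_taken; step.
step_load (Dcnt + W)%N.
step; step.
apply: cont; first bounded_hyp.
by rd_simpl; arith.
Qed.

Lemma run_inner_exit i c m Q k : (0 < n)%N -> (i < n)%N -> (c <= W)%N -> (c < wn w i)%N ->
  bounded L M%:Z m -> inner_inv i c m ->
  (forall m', bounded L M%:Z m' -> outer_inv i.+1 m' -> reaches_from Q 82 m' k) ->
  reaches_from Q 88 m (8 + k).
Proof.
move=> n_gt0 lt_in le_cW lt_cw bm.
case=> [[r3 [r4 [r5 [r6 [r7 [r8 r9]]]]]] [inputs [r10 [r11 [r12 tab]]]]] cont.
have [W_B n_B B_M] := input_bounds; have [_ wi_B _] := item_bounds lt_in.
step; step_skip; do 6 step.
apply: cont; first bounded_hyp.
split; first by repeat split; rd_simpl; arith.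
  by move=> j lt_jn; rd_simpl; apply: inputs.
move=> c' le_c'W; rd_simpl; have := tab c' le_c'W.
case: (leqP c' c) => // le_c'c.
by rewrite dpS_lt // (leq_ltn_trans le_c'c).
Qed.

Lemma inner_inv_cells i c m : (wn w i <= c)%N -> (c <= W)%N -> inner_inv i c m ->
  [/\ rd m (Dval + c) = (dp w v i c).1, rd m (Dcnt + c) = ((dp w v i c).2)%:Z - 1,
      rd m (Dval + (c - wn w i)) = (dp w v i (c - wn w i)).1 &
      rd m (Dcnt + (c - wn w i)) = ((dp w v i (c - wn w i)).2)%:Z - 1].
Proof.
move=> le_wc le_cW [_ [_ [_ [_ [_ tab]]]]].
have [cell_c cnt_c] := tab c le_cW; rewrite leqnn in cell_c cnt_c.
have [cell_cw cnt_cw] := tab (c - wn w i)%N (leq_trans (leq_subr _ _) le_cW).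
by rewrite leq_subr in cell_cw cnt_cw.
Qed.

Lemma run_update_keep i c m Q k : (0 < n)%N -> (i < n)%N -> (c <= W)%N -> (wn w i <= c)%N ->
  (dp w v i (c - wn w i)).1 + vn v i < (dp w v i c).1 ->
  bounded L M%:Z m -> inner_inv i c m ->
  (forall m', bounded L M%:Z m' -> inner_inv i (c - 1) m' -> reaches_from Q 88 m' k) ->
  reaches_from Q 88 m (13 + k).
Proof.
move=> n_gt0 lt_in le_cW le_wc cmp bm inv cont.
have [W_B n_B B_M] := input_bounds; have [wi_gt0 wi_B vi_B] := item_bounds lt_in.
have [val_c cnt_c val_cw cnt_cw] := inner_inv_cells le_wc le_cW inv.
have [d1 d2] := @dp_bounds i c (ltnW lt_in).
have [e1 e2] := @dp_bounds i (c - wn w i)%N (ltnW lt_in).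
have cells := cell_bound n_gt0.
case: inv => [[r3 [r4 [r5 [r6 [r7 [r8 r9]]]]]] [inputs [r10 [r11 [r12 tab]]]]].
step; step_taken; step; step.
step_load (Dval + c)%N.
step_load (Dval + (c - wn w i))%N.
step; step; step_skip; do 4 step.
apply: cont; first bounded_hyp.
split; first by repeat split; rd_simpl; arith.
split; first by move=> j lt_jn; rd_simpl; apply: inputs.
do 3 (split; first by rd_simpl; arith).
move=> c' le_c'W; cbv beta; case: (eqVneq c' c) => [->|ne].
  rewrite (_ : (c <= c - 1)%N = false); last lia.
  by rewrite dpS_ge // comb_gt //; rd_simpl; split; arith.
by rewrite (_ : (c' <= c - 1)%N = (c' <= c)%N); [rd_simpl; exact: tab | lia].
Qed.

Lemma run_update_take i c m Q k : (0 < n)%N -> (i < n)%N -> (c <= W)%N -> (wn w i <= c)%N ->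
  (dp w v i c).1 < (dp w v i (c - wn w i)).1 + vn v i ->
  bounded L M%:Z m -> inner_inv i c m ->
  (forall m', bounded L M%:Z m' -> inner_inv i (c - 1) m' -> reaches_from Q 88 m' k) ->
  reaches_from Q 88 m (20 + k).
Proof.
move=> n_gt0 lt_in le_cW le_wc cmp bm inv cont.
have [W_B n_B B_M] := input_bounds; have [wi_gt0 wi_B vi_B] := item_bounds lt_in.
have [val_c cnt_c val_cw cnt_cw] := inner_inv_cells le_wc le_cW inv.
have [d1 d2] := @dp_bounds i c (ltnW lt_in).
have [e1 e2] := @dp_bounds i (c - wn w i)%N (ltnW lt_in).
have cells := cell_bound n_gt0.
case: inv => [[r3 [r4 [r5 [r6 [r7 [r8 r9]]]]]] [inputs [r10 [r11 [r12 tab]]]]].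
step; step_taken; step; step.
step_load (Dval + c)%N.
step_load (Dval + (c - wn w i))%N.
step; step; step_taken; step; step_skip.
step_store (Dval + c)%N.
step; step.
step_load (Dcnt + (c - wn w i))%N.
step_store (Dcnt + c)%N.
do 4 step.
apply: cont; first bounded_hyp.
split; first by repeat split; rd_simpl; arith.
split; first by move=> j lt_jn; rd_simpl; apply: inputs.
do 3 (split; first by rd_simpl; arith).
move=> c' le_c'W; cbv beta; case: (eqVneq c' c) => [->|ne].
  rewrite (_ : (c <= c - 1)%N = false); last lia.
  by rewrite dpS_ge // comb_lt //; rd_simpl; simpl fst; simpl snd; split; arith.
by rewrite (_ : (c' <= c - 1)%N = (c' <= c)%N); [rd_simpl; exact: tab | lia].
Qed.

Lemma run_update_tie i c m Q k : (0 < n)%N -> (i < n)%N -> (c <= W)%N -> (wn w i <= c)%N ->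
  (dp w v i c).1 = (dp w v i (c - wn w i)).1 + vn v i ->
  bounded L M%:Z m -> inner_inv i c m ->
  (forall m', bounded L M%:Z m' -> inner_inv i (c - 1) m' -> reaches_from Q 88 m' k) ->
  reaches_from Q 88 m (22 + k).
Proof.
move=> n_gt0 lt_in le_cW le_wc cmp bm inv cont.
have [W_B n_B B_M] := input_bounds; have [wi_gt0 wi_B vi_B] := item_bounds lt_in.
have [val_c cnt_c val_cw cnt_cw] := inner_inv_cells le_wc le_cW inv.
have [d1 d2] := @dp_bounds i c (ltnW lt_in).
have [e1 e2] := @dp_bounds i (c - wn w i)%N (ltnW lt_in).
have cells := cell_bound n_gt0.
case: inv => [[r3 [r4 [r5 [r6 [r7 [r8 r9]]]]]] [inputs [r10 [r11 [r12 tab]]]]].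
step; step_taken; step; step.
step_load (Dval + c)%N.
step_load (Dval + (c - wn w i))%N.
step; step; step_taken; step; step_taken; step; step.
step_load (Dcnt + (c - wn w i))%N.
step_load (Dcnt + c)%N.
do 3 step.
step_store (Dcnt + c)%N.
do 3 step.
apply: cont; first bounded_hyp.
split; first by repeat split; rd_simpl; arith.
split; first by move=> j lt_jn; rd_simpl; apply: inputs.
do 3 (split; first by rd_simpl; arith).
move=> c' le_c'W; cbv beta; case: (eqVneq c' c) => [->|ne].
  rewrite (_ : (c <= c - 1)%N = false); last lia.
  by rewrite dpS_ge // comb_eq //; rd_simpl; simpl fst; simpl snd; split; arith.
by rewrite (_ : (c' <= c - 1)%N = (c' <= c)%N); [rd_simpl; exact: tab | lia].
Qed.

Lemma run_update i c m Q k : (0 < n)%N -> (i < n)%N -> (c <= W)%N -> (wn w i <= c)%N ->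
  bounded L M%:Z m -> inner_inv i c m ->
  (forall m', bounded L M%:Z m' -> inner_inv i (c - 1) m' -> reaches_from Q 88 m' k) ->
  reaches_from Q 88 m (22 + k).
Proof.
move=> n_gt0 lt_in le_cW le_wc bm inv cont.
case: (ltrgtP ((dp w v i (c - wn w i)).1 + vn v i) (dp w v i c).1) => cmp.
- apply: (reaches_mono (k := (13 + k)%N)); first lia.
  exact: run_update_keep cmp bm inv cont.
- apply: (reaches_mono (k := (20 + k)%N)); first lia.
  exact: run_update_take cmp bm inv cont.
- exact: run_update_tie (esym cmp) bm inv cont.
Qed.

Lemma run_inner_loop i Q k c m : (0 < n)%N -> (i < n)%N -> (c <= W)%N ->
  bounded L M%:Z m -> inner_inv i c m ->
  (forall m', bounded L M%:Z m' -> outer_inv i.+1 m' -> reaches_from Q 82 m' k) ->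
  reaches_from Q 88 m (22 * c + 30 + k).
Proof.
move=> n_gt0 lt_in; have [wi_gt0 _ _] := item_bounds lt_in.
elim: c m => [|c IH] m le_cW bm inv cont.
  apply: (reaches_mono (k := (8 + k)%N)); first lia.
  exact: run_inner_exit wi_gt0 bm inv cont.
case: (ltnP c.+1 (wn w i)) => [lt_cw | le_wc].
  apply: (reaches_mono (k := (8 + k)%N)); first lia.
  exact: run_inner_exit lt_cw bm inv cont.
rewrite (_ : (22 * c.+1 + 30 + k = 22 + (22 * c + 30 + k))%N); last lia.
apply: (run_update n_gt0 lt_in le_cW le_wc bm inv) => m' bm' inv'.
by apply: IH bm' _ cont; [lia | rewrite subn1 in inv'].
Qed.

Lemma run_outer_loop Q k d i m : (0 < n)%N -> (i + d = n)%N ->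
  bounded L M%:Z m -> outer_inv i m ->
  (forall m', bounded L M%:Z m' -> rd m' 0 = ((dp w v n W).2)%:Z -> reaches_from Q 127 m' k) ->
  reaches_from Q 82 m (d * (22 * W + 36) + 6 + k).
Proof.
move=> n_gt0; elim: d i m => [|d IH] i m id_n bm inv cont.
  rewrite addn0 in id_n; subst i; rewrite mul0n add0n.
  exact: run_outer_exit n_gt0 bm inv cont.
have lt_in : (i < n)%N by lia.
rewrite (_ : (d.+1 * (22 * W + 36) + 6 + k
              = 6 + (22 * W + 30 + (d * (22 * W + 36) + 6 + k)))%N); last lia.
apply: (run_outer_step n_gt0 lt_in bm inv) => m1 bm1 inv1.
apply: (run_inner_loop n_gt0 lt_in (leqnn W) bm1 inv1) => m2 bm2 inv2.
by apply: IH bm2 inv2 cont; lia.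
Qed.

Lemma zwords_lt_M z : `|z| < M%:Z -> (zwords ws z <= K)%N.
Proof. by move=> z_M; apply: zwords_leq; [exact: word_size_gt0 | lia | lia]. Qed.

Lemma bounded_inp L' : (2 * n + 2 <= L')%N -> bounded L' M%:Z inp.
Proof.
move=> le_L'; have := B_lt_M => B_M; apply/andP; split; first by rewrite size_inp.
by apply/allP => z /inp_lt_B; lia.
Qed.

Lemma prog_correct_nonempty : (0 < n)%N -> exists fuel m T S,
  exec prog fuel inp = Some (m, T, S) /\ rd m 0 = ((dp w v n W).2)%:Z /\
  (T <= 5000 * (n ^ 2 * W + 1))%N /\ (S <= 5000 * (n ^ 2 * W + 1))%N.
Proof.
move=> n_gt0; have b0 : bounded L M%:Z inp by apply: bounded_inp; lia.
pose Q pc m := pc = 127%N /\ rd m 0 = ((dp w v n W).2)%:Z.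
have r0 : reaches_from Q 0 inp
    (59 + (9 * (2 * n - 1) + 3 + (14 + (n * (22 * W + 36) + 6 + 0)))).
  apply: (run_copy_start n_gt0 b0) => m1 b1 inv1.
  have copy_all : (2 * n - 1 + 2 = 2 * n + 1)%N by lia.
  apply: (run_copy_loop (d := 2 * n - 1) n_gt0 _ b1); [lia | by rewrite copy_all |].
  move=> m2 b2 inv2; apply: (run_setup n_gt0 b2 inv2) => m3 b3 inv3.
  apply: (run_outer_loop n_gt0 (add0n n) b3 inv3) => m4 _ rd0.
  exact: reaches_done.
have halts pc m : Q pc m -> step ws prog pc m = None by case=> -> _.
have [pc [m [fuel [T [S [[_ rd0] run_ok le_T le_S]]]]]] :=
  run_of_reaches M_gt0 zwords_lt_M 0 (mem_space ws inp) r0 b0 halts.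
exists fuel, m, T, S; split => //; split => //; split.
  by apply: leq_trans le_T _; rewrite add0n time_bound_arith.
by have := mem_space_bounded zwords_lt_M b0; have := space_bound_arith n_gt0 W_gt0; lia.
Qed.

Lemma prog_correct_empty : n = 0%N -> exists fuel m T S,
  exec prog fuel inp = Some (m, T, S) /\ rd m 0 = ((dp w v n W).2)%:Z /\
  (T <= 5000 * (n ^ 2 * W + 1))%N /\ (S <= 5000 * (n ^ 2 * W + 1))%N.
Proof.
(* Without items the run never leaves the two input cells, so the space bound does not
   depend on W. *)
move=> n0; have b0 : bounded 2 M%:Z inp by apply: bounded_inp; rewrite n0.
have := B_lt_M => B_M.
pose Q pc m := pc = 129%N /\ rd m 0 = 1.
have r0 : reaches ws 2 M%:Z prog Q 0 inp 2.
  have rd1 : rd inp 1 = n%:Z by [].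
  step_taken; step.
  by apply: reaches_done; split => //; rd_simpl.
have halts pc m : Q pc m -> step ws prog pc m = None by case=> -> _.
have [pc [m [fuel [T [S [[_ rd0] run_ok le_T le_S]]]]]] :=
  run_of_reaches M_gt0 zwords_lt_M 0 (mem_space ws inp) r0 b0 halts.
have dp_empty i : i = 0%N -> (dp w v i W).2 = 1%N by move=> ->.
exists fuel, m, T, S; split => //; split; first by rewrite rd0 dp_empty.
have n9 : (n + 9 = 9)%N by rewrite n0.
have sp := mem_space_bounded zwords_lt_M b0; rewrite n9 in le_T le_S sp.
have le_5000 : (5000 <= 5000 * (n ^ 2 * W + 1))%N by rewrite leq_pmulr ?addn1.
lia.
Qed.

End Verification.

Lemma prog_correct n W (w : 'I_n -> nat) (v : 'I_n -> int) :
  (0 < W)%N -> (forall i, 0 < w i)%N ->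
  exists fuel m T S,
    exec prog fuel (ks_input W w v) = Some (m, T, S) /\ rd m 0 = ((dp w v n W).2)%:Z /\
    (T <= 5000 * (n ^ 2 * W + 1))%N /\ (S <= 5000 * (n ^ 2 * W + 1))%N.
Proof.
move=> W_gt0 w_gt0; case: (posnP n) => [n0 | n_gt0].
  exact: prog_correct_empty.
exact: prog_correct_nonempty.
Qed.

Theorem theorem1 :
  exists (P : seq instr) (C : nat),
  forall (n W : nat) (w : 'I_n -> nat) (v : 'I_n -> int),
    (0 < W)%N -> (forall i, 0 < w i)%N ->
    exists (fuel : nat) (m : memory) (T S : nat),
      exec P fuel (ks_input W w v) = Some (m, T, S) /\
      rd m 0 = (#|ks_optimal W w v|)%:Z /\
      (T <= C * (n ^ 2 * W + 1))%N /\
      (S <= C * (n ^ 2 * W + 1))%N.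
Proof.
exists prog, 5000%N => n W w v W_gt0 w_gt0.
by rewrite card_ks_optimal; apply: prog_correct.
Qed.
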